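(* Let $A=(Q,q_0,\Sigma,\delta,\alpha)$ with $Q_d$ be an LDBA, $\mathsf{Ord}$ an ordering of its states w.r.t. $Q_d$, and $w\in\Sigma^\omega$. The color summary of the run DAG $G_w$ is even if and only if $G_w$ contains an accepting run (equivalently, iff $w\in\mathsf L(A)$).
   Context: A (transition-based) nondeterministic Büchi automaton is $A=(Q,q_0,\Sigma,\delta,\alpha)$ with finite $Q$, $q_0\in Q$, finite alphabet $\Sigma$, total $\delta\subseteq Q\times\Sigma\times Q$, and accepting transitions $\alpha\subseteq\delta$. A run on $w\in\Sigma^\omega$ is $\rho:\mathbb N\to Q$ with $\rho(0)=q_0$, $(\rho(i),w(i),\rho(i+1))\in\delta$; it is accepting if $(\rho(i),w(i),\rho(i+1))\in\alpha$ for infinitely many $i$; $\mathsf L(A)$ is the set of words with an accepting run. An LDBA additionally has $Q_d\subseteq Q$ with (1) $\alpha\subseteq Q_d\times\Sigma\times Q_d$; (2) each $q\in Q_d$ has exactly one $\sigma$-successor $\delta(q,\sigma)$ for each $\sigma$; (3) successors of states in $Q_d$ are in $Q_d$. Assume $q_0\notin Q_d$. Run DAG $G_w=(V,E)$: $V_0=\{(q_0,0)\}$, $V_i=\{(q,i)\mid\exists(q',i-1)\in V_{i-1}:(q',w(i-1),q)\in\delta\}$, $E=\{((q,i),(q',i+1))\in V_i\times V_{i+1}\mid (q,w(i),q')\in\delta\}$, $V^d_i=V_i\cap(Q_d\times\{i\})$. Runs are paths from $(q_0,0)$; a run $v_0v_1\dots$ with $v_i=(q_i,i)$ is accepting if $(q_i,w(i),q_{i+1})\in\alpha$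 for infinitely many $i$. An ordering w.r.t. $Q_d$ is $\mathsf{Ord}:Q\to\{1,\dots,|Q_d|,+\infty\}$ with value $+\infty$ exactly on $Q\setminus Q_d$ and injective on $Q_d$; $\mathsf{Ord}((q,i))=\mathsf{Ord}(q)$. For run prefixes of equal length $n+1$, $\rho(0..n)\sqsubseteq\rho'(0..n)$ iff their $\mathsf{Ord}$-sequences are equal or lexicographically smaller (first differing position $i$ has $\mathsf{Ord}(\rho(i))<\mathsf{Ord}(\rho'(i))$, with $+\infty$ above all integers). For distinct $v,v'\in V_i$, $v\sqsubset_i v'$ iff some run prefix ending in $v$ is $\sqsubseteq$-smaller than all run prefixes ending in $v'$; this is a total order on $V^d_i$. $\mathsf{Ind}_i(v)\in\{1,\dots,|Q_d|\}$ is the position of $v\in V^d_i$ in this order (the smallest has index 1). $\mathsf{Dec}(V^d_i)$ is the set of $v\in V^d_i$ whose (unique) successor $v'\in V^d_{i+1}$ satisfies $\mathsf{Ind}_{i+1}(v')<\mathsf{Ind}_i(v)$. $\mathsf{Acc}(V^d_i)$ is the set of $v=(q,i)\in V^d_i$ having an edge to some $(q',i+1)\in V^d_{i+1}$ with $(q,w(i),q')\in\alpha$. The color of the step from level $i$ to $i+1$ is: if $\mathsf{Dec}=\emptyset$ and $\mathsf{Acc}\neq\emptyset$: $2\min_{v\in\mathsf{Acc}(V^d_i)}\mathsf{Ind}_i(v)$; if $\mathsf{Dec}\ne\emptyset$ and $\mathsf{Acc}=\emptyset$: $2\min_{v\in\mathsf{Dec}(V^d_i)}\mathsf{Ind}_i(v)-1$;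 if both nonempty: the minimum of these two values; if both empty: $2|Q_d|+1$. The color summary of $G_w$ is the minimal color occurring infinitely often in this sequence of colors. *)

From HB Require Import structures.
From mathcomp Require Import all_boot.
Set Implicit Arguments. Unset Strict Implicit. Unset Printing Implicit Defensive.

Section LDBA.
Variables (Q Sigma : finType) (q0 : Q) (delta alpha : Q -> Sigma -> Q -> bool)
  (Qd : {set Q}).

Definition is_LDBA : Prop :=
  (forall q s, exists q', delta q s q') /\
  (forall q s q', alpha q s q' -> delta q s q') /\
  (forall q s q', alpha q s q' -> (q \in Qd) && (q' \in Qd)) /\
  (forall q s, q \in Qd -> exists! q', delta q s q') /\
  (forall q s q', q \in Qd -> delta q s q' -> q' \in Qd) /\
  q0 \notin Qd.

(* Ord : Q -> {1..|Qd|, +oo}; None encodes +oo. *)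
Definition is_ordering (Ord : Q -> option nat) : Prop :=
  [/\ (forall q, (Ord q == None) = (q \notin Qd)),
      (forall q, q \in Qd -> exists k, Ord q = Some k /\ 1 <= k <= #|Qd|)
    & {in Qd &, injective Ord}].

Definition olt (x y : option nat) : bool :=
  match x, y with
  | Some a, Some b => a < b
  | Some _, None => true
  | _, _ => false
  end.

Fixpoint lexle (s t : seq (option nat)) : bool :=
  match s, t with
  | [::], _ => true
  | x :: s', y :: t' => olt x y || ((x == y) && lexle s' t')
  | _ :: _, [::] => false
  end.

Variables (Ord : Q -> option nat) (w : nat -> Sigma).

Fixpoint V (i : nat) : {set Q} :=
  match i with
  | 0 => [set q0]
  | i'.+1 => [set q | [exists q' in V i', delta q' (w i') q]]
  end.

Definition Vd (i : nat) : {set Q} := V i :&: Qd.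

Definition prefix_to (n : nat) (p : n.+1.-tuple Q) (q : Q) : bool :=
  [&& nth q0 p 0 == q0,
      [forall j : 'I_n, delta (nth q0 p j) (w j) (nth q0 p j.+1)]
    & nth q0 p n == q].

Definition prec (n : nat) (v v' : Q) : bool :=
  (v != v') &&
  [exists p : n.+1.-tuple Q, prefix_to p v &&
     [forall p' : n.+1.-tuple Q,
        prefix_to p' v' ==> lexle (map Ord p) (map Ord p')]].

Definition Ind (n : nat) (v : Q) : nat :=
  #|[set u in Vd n | prec n u v]|.+1.

Definition Dec (i : nat) : {set Q} :=
  [set q in Vd i | [exists q' in Vd i.+1,
      delta q (w i) q' && (Ind i.+1 q' < Ind i q)]].

Definition Acc (i : nat) : {set Q} :=
  [set q in Vd i | [exists q' in Vd i.+1,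
      delta q (w i) q' && alpha q (w i) q']].

Definition minInd (i : nat) (S : {set Q}) : nat :=
  \big[minn/#|Qd|.+1]_(q in S) Ind i q.

Definition color (i : nat) : nat :=
  let cA := 2 * minInd i (Acc i) in
  let cD := (2 * minInd i (Dec i)) - 1 in
  if Dec i == set0 then
    (if Acc i == set0 then 2 * #|Qd| + 1 else cA)
  else
    (if Acc i == set0 then cD else minn cA cD).

Definition inf_often (c : nat) : Prop :=
  forall N, exists i, N <= i /\ color i = c.

Definition is_color_summary (c : nat) : Prop :=
  inf_often c /\ forall c', inf_often c' -> c <= c'.

Definition has_accepting_run : Prop :=
  exists rho : nat -> Q,
    [/\ rho 0 = q0,
        (forall i, delta (rho i) (w i) (rho i.+1))
      & (forall N, exists i, N <= i /\ alpha (rho i) (w i) (rho i.+1))].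

End LDBA.

From mathcomp Require Import all_boot.
From mathcomp Require Import zify.
From Stdlib Require Import Classical.
Set Implicit Arguments. Unset Strict Implicit. Unset Printing Implicit Defensive.

(* Along a run that has entered the deterministic part [Qd], the index
   [Ind i (rho i)] never increases: every vertex below a successor is the
   successor of a vertex below its predecessor.  So the index of an accepting
   run stabilises at some k, and the run keeps producing colors <= 2k.  Once
   the index of [v] stops dropping, successors below [v] keep their relative
   order, so no vertex of index <= k decreases; odd colors then exceed 2k and
   the summary is even.  Conversely, if the summary 2k is even, take a late
   level where it comes from an accepting vertex of index k and follow its
   successors: an index drop would yield the odd color 2k - 1, so the index
   stays k, and every later occurrence of color 2k is an accepting step of
   this run, by injectivity of [Ind]. *)

Lemma oltxx x : olt x x = false.
Proof. by case: x => //= n; rewrite ltnn. Qed.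

Lemma olt_trans x y z : olt x y -> olt y z -> olt x z.
Proof. by case: x; case: y; case: z => //= a b c; apply: ltn_trans. Qed.

Lemma olt_total x y : [|| olt x y, olt y x | x == y].
Proof. by case: x; case: y => //= a b; case: (ltngtP b a) => //= ->; rewrite ?orbT. Qed.

Lemma olt_asym x y : olt x y -> olt y x = false.
Proof. by move=> lt_xy; apply/negP => /(olt_trans lt_xy); rewrite oltxx. Qed.

Lemma lexle_refl s : lexle s s.
Proof. by elim: s => //= x s ->; rewrite eqxx orbT. Qed.

Lemma lexle_trans s t u : lexle s t -> lexle t u -> lexle s u.
Proof.
elim: s t u => [//|x s IH] [|y t] [|z u] //=.
case/orP=> [lt_xy|/andP[/eqP <- le_st]]; case/orP=> [lt_yz|/andP[/eqP <- le_tu]].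
- by rewrite (olt_trans lt_xy lt_yz).
- by rewrite lt_xy.
- by rewrite lt_yz.
- by rewrite eqxx (IH _ _ le_st le_tu) orbT.
Qed.

Lemma lexle_total s t : lexle s t || lexle t s.
Proof.
elim: s t => [//|x s IH] [|y t] //=.
case/or3P: (olt_total x y) => [->//|->|/eqP->]; first by rewrite orbT.
by rewrite oltxx eqxx /=.
Qed.

Lemma lexle_anti s t : lexle s t -> lexle t s -> s = t.
Proof.
elim: s t => [|x s IH] [|y t] //=.
case/orP=> [lt_xy|/andP[/eqP <- le_st]].
  by rewrite (olt_asym lt_xy) /= => /andP[/eqP eq_yx _]; rewrite eq_yx oltxx in lt_xy.
by rewrite oltxx eqxx /= => /(IH _ le_st) ->.
Qed.

Lemma lexle_rcons s t x y : size s = size t ->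
  lexle (rcons s x) (rcons t y) = lexle s t && ((s == t) ==> lexle [:: x] [:: y]).
Proof.
elim: s t => [|a s IH] [|b t] //= [/IH ->]; rewrite eqseq_cons.
case lt_ab: (olt a b) => /=; first by case: eqP lt_ab => // ->; rewrite oltxx.
by case: (a == b); rewrite ?andbF.
Qed.

Lemma lexle_nseq_None s : lexle s (nseq (size s) None).
Proof. by elim: s => //= -[n|] s ->; rewrite ?eqxx ?orbT. Qed.

Lemma big_minn_le (I : finType) (P : pred I) (F : I -> nat) d x :
  P x -> \big[minn/d]_(i | P i) F i <= F x.
Proof.
move=> Px; rewrite -big_filter.
have : x \in [seq i <- index_enum I | P i] by rewrite mem_filter Px mem_index_enum.
elim: (filter _ _) => //= y r IH; rewrite inE big_cons => /predU1P[->|/IH].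
  exact: geq_minl.
exact/leq_trans/geq_minr.
Qed.

Lemma big_minn_attained (I : finType) (P : pred I) (F : I -> nat) d x :
  P x -> (forall y, P y -> F y < d) -> exists2 y, P y & \big[minn/d]_(i | P i) F i = F y.
Proof.
move=> Px lt_d.
have : \big[minn/d]_(i | P i) F i = d \/ exists2 y, P y & \big[minn/d]_(i | P i) F i = F y.
  apply: (big_ind (fun m => m = d \/ exists2 y, P y & m = F y)) => [|a b ha hb|y Py];
    [by left | | by right; exists y].
  by case: leqP.
by case=> // eq_d; have := big_minn_le F d Px; rewrite eq_d leqNgt lt_d.
Qed.

Section EventualBehaviour.
Variable f : nat -> nat.

Definition infinitely_often c := forall N, exists i, N <= i /\ f i = c.

Lemma finitely_often c : ~ infinitely_often c -> exists N, forall i, N <= i -> f i <> c.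
Proof.
move=> not_inf; apply: NNPP => no_bound; apply: not_inf => N.
apply: NNPP => no_hit; apply: no_bound; exists N => i le_Ni fi_c.
by apply: no_hit; exists i.
Qed.

Lemma infinitely_often_le B : (forall N, exists i, N <= i /\ f i <= B) ->
  exists2 c, c <= B & infinitely_often c.
Proof.
elim: B => [|B IH] often_le.
  exists 0 => // N; have [i [le_Ni]] := often_le N.
  by rewrite leqn0 => /eqP fi0; exists i.
have [often_B1|] := classic (infinitely_often B.+1); first by exists B.+1.
move=> /finitely_often[N0 not_B1].
have [N|c le_cB often_c] := IH; last by exists c => //; apply: leqW.
have [i [le_i le_fi]] := often_le (maxn N N0); rewrite geq_max in le_i.
case/andP: le_i => le_Ni le_N0i; exists i; split=> //.
by have := not_B1 i le_N0i; lia.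
Qed.

Lemma exists_min_infinitely_often c : infinitely_often c ->
  exists m, infinitely_often m /\ forall c', infinitely_often c' -> m <= c'.
Proof.
elim/ltn_ind: c => c IH often_c.
have [[c' lt_c'c often_c']|none_below] := classic (exists2 c', c' < c & infinitely_often c').
  exact: IH often_c'.
exists c; split=> // c' often_c'; rewrite leqNgt; apply/negP => lt_c'c.
by apply: none_below; exists c'.
Qed.

Lemma eventually_ge c : (forall c', c' < c -> ~ infinitely_often c') ->
  exists N, forall i, N <= i -> c <= f i.
Proof.
elim: c => [|c IH] rare_below; first by exists 0.
have [c' lt_c'c|N1 ge_c] := IH; first by apply: rare_below; apply: leqW.
have [N2 ne_c] := finitely_often (rare_below c (ltnSn c)).
exists (maxn N1 N2) => i; rewrite geq_max => /andP[le_N1i le_N2i].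
by have := ge_c _ le_N1i; have := ne_c _ le_N2i; lia.
Qed.

Lemma eventually_constant M : (forall i, M <= i -> f i.+1 <= f i) ->
  exists N, M <= N /\ forall i, N <= i -> f i = f N.
Proof.
have [n] := ubnP (f M); elim: n M => // n IH M lt_fM_n nonincr.
have le_fM i : M <= i -> f i <= f M.
  move=> /subnKC <-; elim: (i - M) => [|d IHd]; first by rewrite addn0.
  by rewrite addnS; apply: leq_trans (nonincr _ (leq_addr _ _)) IHd.
have [[i [le_Mi lt_fi]]|no_drop] := classic (exists i, M <= i /\ f i < f M).
  have [|j le_ij|N [le_iN cst]] := IH i; first by lia.
    by apply: nonincr; apply: leq_trans le_ij.
  by exists N; split=> //; apply: leq_trans le_iN.
exists M; split=> // i le_Mi; apply/eqP; rewrite eqn_leq le_fM //= leqNgt.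
by apply/negP => lt_fi; apply: no_drop; exists i.
Qed.

End EventualBehaviour.

Section RunDag.
Variables (Q Sigma : finType) (q0 : Q) (delta alpha : Q -> Sigma -> Q -> bool)
  (Qd : {set Q}) (Ord : Q -> option nat) (w : nat -> Sigma).
Hypothesis ldba : is_LDBA q0 delta alpha Qd.
Hypothesis ordering : is_ordering Qd Ord.

Local Notation Vn := (V q0 delta w).
Local Notation Vdn := (Vd q0 delta Qd w).
Local Notation precn := (prec q0 delta Ord w).
Local Notation Indn := (Ind q0 delta Qd Ord w).
Local Notation Accn := (Acc q0 delta alpha Qd w).
Local Notation Decn := (Dec q0 delta Qd Ord w).
Local Notation minIndn := (minInd q0 delta Qd Ord w).
Local Notation colorn := (color q0 delta alpha Qd Ord w).

Lemma alpha_in_Qd q s q' : alpha q s q' -> (q \in Qd) && (q' \in Qd).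
Proof. by case: ldba => _ [_ [h _]]; apply: h. Qed.

Lemma alpha_delta q s q' : alpha q s q' -> delta q s q'.
Proof. by case: ldba => _ [h _]; apply: h. Qed.

Lemma Qd_closed q s q' : q \in Qd -> delta q s q' -> q' \in Qd.
Proof. by case: ldba => _ [_ [_ [_ [h _]]]]; apply: h. Qed.

(* Outside [Qd] this is an arbitrary successor (or [q] itself). *)
Definition succ n q := odflt q [pick q' | delta q (w n) q'].

Lemma succP n q : q \in Qd ->
  delta q (w n) (succ n q) /\ forall q', delta q (w n) q' -> q' = succ n q.
Proof.
move=> qQd; case: ldba => _ [_ [_ [det _]]]; have [x [dx uniq_x]] := det q (w n) qQd.
rewrite /succ; case: pickP => [y dy|/(_ x)]; last by rewrite dx.
by split=> // q' dq'; rewrite -(uniq_x _ dq') (uniq_x _ dy).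
Qed.

Lemma Ord_None q : (Ord q == None) = (q \notin Qd).
Proof. by case: ordering => h _ _; apply: h. Qed.

Lemma Ord_neq x z : x \in Qd -> x != z -> Ord x != Ord z.
Proof.
move=> xQd ne_xz; apply/eqP => eq_Ord; case zQd: (z \in Qd).
  by case: ordering => _ _ inj; rewrite (inj _ _ xQd zQd eq_Ord) eqxx in ne_xz.
by move/negbT: zQd; rewrite -Ord_None -eq_Ord Ord_None xQd.
Qed.

Lemma VS n x v : x \in Vn n -> delta x (w n) v -> v \in Vn n.+1.
Proof. by move=> Vx dv; rewrite /= inE; apply/existsP; exists x; rewrite Vx. Qed.

Lemma VdE n x : (x \in Vdn n) = (x \in Vn n) && (x \in Qd).
Proof. by rewrite /Vd inE. Qed.

Lemma Vd_V n v : v \in Vdn n -> v \in Vn n.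
Proof. by rewrite VdE => /andP[]. Qed.

Lemma Vd_Qd n v : v \in Vdn n -> v \in Qd.
Proof. by rewrite VdE => /andP[]. Qed.

Lemma succ_Vd n q : q \in Vdn n -> succ n q \in Vdn n.+1.
Proof.
rewrite VdE => /andP[Vq qQd]; have [dq _] := succP n qQd.
by rewrite VdE (VS Vq dq) (Qd_closed qQd dq).
Qed.

Definition trace n v (t : seq (option nat)) : Prop :=
  exists p : n.+1.-tuple Q, prefix_to q0 delta w p v /\ t = map Ord p.

Lemma trace0 v t : trace 0 v t -> v = q0 /\ t = [:: Ord q0].
Proof. by case=> -[[|x [|y s]] //= _] [/and3P[/eqP /= -> _ /eqP <-] ->]. Qed.

Lemma trace_init : trace 0 q0 [:: Ord q0].
Proof.
have size1 : size [:: q0] == 1 by [].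
by exists (Tuple size1); split=> //; apply/and3P; split=> //; apply/forallP => -[].
Qed.

Lemma traceS n v' t : trace n.+1 v' t <->
  exists v t0, [/\ trace n v t0, delta v (w n) v' & t = rcons t0 (Ord v')].
Proof.
split.
- case=> -[s /= /eqP size_s] [/and3P[/= s0 /forallP ds /eqP s_last] ->].
  case/lastP: s size_s s0 ds s_last => [|s x] //; rewrite size_rcons => -[size_s] s0 ds.
  rewrite nth_rcons size_s ltnn eqxx => <-.
  have size_s' : size s == n.+1 by rewrite size_s.
  exists (nth q0 s n), (map Ord s); split; last by rewrite map_rcons.
  + exists (Tuple size_s'); split=> //; apply/and3P; split=> /=.
    * by rewrite nth_rcons size_s in s0.
    * apply/forallP => j; have := ds (widen_ord (leqnSn _) j).
      by rewrite /= !nth_rcons size_s !ltnS (ltn_ord j) (ltnW (ltn_ord j)).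
    * by [].
  + by have := ds ord_max; rewrite /= !nth_rcons size_s ltnSn ltnn eqxx.
- case=> v [t0 [[p [/and3P[p0 /forallP dp /eqP p_last] ->]] dv ->]].
  exists (rcons_tuple p v'); split; last by rewrite /= map_rcons.
  apply/and3P; split; [by rewrite /= nth_rcons size_tuple | |
    by rewrite /= nth_rcons size_tuple ltnn eqxx].
  apply/forallP => j; rewrite /= !nth_rcons size_tuple.
  have [lt_jn|le_nj] := ltnP j n.
    by have := dp (Ordinal lt_jn); rewrite /= ltnS (ltnW lt_jn) ltnS lt_jn.
  have -> : nat_of_ord j = n by apply/eqP; rewrite eqn_leq le_nj -ltnS ltn_ord.
  by rewrite ltnSn ltnn eqxx p_last.
Qed.

Lemma trace_size n v t : trace n v t -> size t = n.+1.
Proof. by case=> p [_ ->]; rewrite size_map size_tuple. Qed.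

Lemma trace_last n v t : trace n v t -> last None t = Ord v.
Proof.
case: n => [/trace0[-> ->] //|n].
by case/traceS => x [t0 [_ _ ->]]; rewrite last_rcons.
Qed.

Lemma trace_V n v t : trace n v t -> v \in Vn n.
Proof.
elim: n v t => [|n IH] v t; first by case/trace0 => -> _; rewrite /= inE.
by case/traceS => x [t0 [tx dv _]]; apply: VS (IH _ _ tx) dv.
Qed.

Lemma V_trace n v : v \in Vn n -> exists t, trace n v t.
Proof.
elim: n v => [|n IH] v; first by rewrite /= inE => /eqP ->; exists [:: Ord q0]; apply: trace_init.
rewrite /= inE => /existsP[x /andP[Vx dv]]; have [t0 tx] := IH _ Vx.
by exists (rcons t0 (Ord v)); apply/traceS; exists x, t0.
Qed.

Lemma trace_notin_Qd n v t : trace n v t -> v \notin Qd -> t = nseq n.+1 None.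
Proof.
elim: n v t => [|n IH] v t.
  by case/trace0 => -> -> vQd; move: vQd; rewrite -Ord_None => /eqP ->.
case/traceS => x [t0 [tx dv ->]] vQd.
have xQd : x \notin Qd by apply: contra vQd => xQd; apply: Qd_closed xQd dv.
rewrite (IH _ _ tx xQd); move: vQd; rewrite -Ord_None => /eqP ->.
by elim: (n.+1) => //= m ->.
Qed.

Lemma trace_neq n x z s t : trace n x s -> trace n z t -> x \in Qd -> x != z -> s != t.
Proof.
move=> tx tz xQd ne_xz; apply: contra (Ord_neq xQd ne_xz) => /eqP eq_st.
by rewrite -(trace_last tx) -(trace_last tz) eq_st.
Qed.

Definition min_trace n v s := trace n v s /\ forall t, trace n v t -> lexle s t.

Lemma seq_lexle_min (A : seq (seq (option nat))) : A != [::] ->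
  exists2 s, s \in A & forall t, t \in A -> lexle s t.
Proof.
elim: A => [//|a [|b A] IH] _.
  by exists a => [|t]; rewrite ?inE // => /eqP ->; apply: lexle_refl.
have [//|s sA min_s] := IH.
have [le_as|le_sa] := orP (lexle_total a s).
  exists a; first exact: mem_head.
  move=> t; rewrite inE => /orP[/eqP ->|tA]; first exact: lexle_refl.
  exact: lexle_trans le_as (min_s _ tA).
exists s; first by rewrite inE sA orbT.
by move=> t; rewrite inE => /orP[/eqP ->|tA] //; apply: min_s.
Qed.

Lemma exists_min_trace n v : v \in Vn n -> exists s, min_trace n v s.
Proof.
move=> Vv; pose A := image (fun p : n.+1.-tuple Q => map Ord p) [pred p | prefix_to q0 delta w p v].
have A_trace t : (t \in A) <-> trace n v t.
  split; first by case/imageP => p pv ->; exists p.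
  by case=> p [pv ->]; apply/imageP; exists p.
have [t0 tv] := V_trace Vv.
have [|s sA min_s] := @seq_lexle_min A.
  by apply/eqP => A0; have /A_trace := tv; rewrite A0.
by exists s; split=> [|t /A_trace]; [apply/A_trace | apply: min_s].
Qed.

Lemma Vd_min_trace n v : v \in Vdn n -> exists s, min_trace n v s.
Proof. by move/Vd_V; apply: exists_min_trace. Qed.

Lemma precP n u v : precn n u v <->
  u != v /\ exists s, trace n u s /\ forall t, trace n v t -> lexle s t.
Proof.
split.
  case/andP => ne_uv /existsP[p /andP[pu /forallP le_p]]; split=> //.
  exists (map Ord p); split; first by exists p.
  by move=> t [p' [p'v ->]]; apply: (implyP (le_p p')).
case=> ne_uv [s [[p [pu ->]] le_s]]; rewrite /prec ne_uv; apply/existsP; exists p.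
by rewrite pu; apply/forallP => p'; apply/implyP => p'v; apply: le_s; exists p'.
Qed.

Lemma precE n u v su sv : min_trace n u su -> min_trace n v sv ->
  precn n u v = (u != v) && lexle su sv.
Proof.
move=> [tu min_u] [tv min_v]; apply/idP/idP.
  by case/precP => -> [s [ts le_s]]; apply: lexle_trans (min_u _ ts) (le_s _ tv).
case/andP => ne_uv le_uv; apply/precP; split=> //; exists su; split=> // t tt.
exact: lexle_trans le_uv (min_v _ tt).
Qed.

Lemma precxx n u : precn n u u = false.
Proof. by rewrite /prec eqxx. Qed.

Lemma prec_total n u v : u \in Vdn n -> v \in Vdn n -> u != v ->
  precn n u v || precn n v u.
Proof.
move=> Vu Vv ne_uv; have [su mu] := Vd_min_trace Vu; have [sv mv] := Vd_min_trace Vv.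
by rewrite (precE mu mv) (precE mv mu) ne_uv eq_sym ne_uv lexle_total.
Qed.

Lemma prec_asym n u v : u \in Vdn n -> v \in Vdn n -> precn n u v -> ~~ precn n v u.
Proof.
move=> Vu Vv; have [su mu] := Vd_min_trace Vu; have [sv mv] := Vd_min_trace Vv.
rewrite (precE mu mv) (precE mv mu) => /andP[ne_uv le_uv]; apply/negP => /andP[_ le_vu].
by move: (trace_neq mu.1 mv.1 (Vd_Qd Vu) ne_uv); rewrite (lexle_anti le_uv le_vu) eqxx.
Qed.

Lemma prec_trans n x u z : x \in Vdn n -> u \in Vdn n -> z \in Vdn n ->
  precn n x u -> precn n u z -> precn n x z.
Proof.
move=> Vx Vu Vz xu uz; have [eq_xz|ne_xz] := eqVneq x z.
  by move: (prec_asym Vu Vz uz); rewrite -eq_xz xu.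
have [sx mx] := Vd_min_trace Vx; have [su mu] := Vd_min_trace Vu.
have [sz mz] := Vd_min_trace Vz.
move: xu uz; rewrite (precE mx mu) (precE mu mz) (precE mx mz) ne_xz.
by case/andP => _ le_xu /andP[_ le_uz]; apply: lexle_trans le_xu le_uz.
Qed.

Definition below n v := [set x in Vdn n | (x == v) || precn n x v].

Lemma belowE n v x : (x \in below n v) = (x \in Vdn n) && ((x == v) || precn n x v).
Proof. by rewrite inE. Qed.

Lemma below_Vd n v x : x \in below n v -> x \in Vdn n.
Proof. by rewrite belowE => /andP[]. Qed.

Lemma below_refl n v : v \in Vdn n -> v \in below n v.
Proof. by move=> Vv; rewrite belowE Vv eqxx. Qed.

Lemma below_prec n u v : u \in Vdn n -> precn n u v -> u \in below n v.
Proof. by move=> Vu uv; rewrite belowE Vu uv orbT. Qed.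

Lemma below_sub n u v : v \in Vdn n -> u \in below n v -> below n u \subset below n v.
Proof.
move=> Vv uv; have Vu := below_Vd uv; apply/subsetP => x xu; have Vx := below_Vd xu.
move: xu uv; rewrite !belowE Vx Vu /= => /orP[/eqP -> //|xu] /orP[/eqP <-|uv].
  by rewrite xu orbT.
by rewrite (prec_trans Vx Vu Vv xu uv) orbT.
Qed.

Lemma Ind_card_below n v : v \in Vdn n -> Indn n v = #|below n v|.
Proof.
move=> Vv; have -> : below n v = v |: [set u in Vdn n | precn n u v].
  by apply/setP => x; rewrite !inE; case: eqVneq => [->|] //=; rewrite -VdE Vv.
by rewrite cardsU1 inE precxx andbF.
Qed.

Lemma Ind_le_card_Qd n q : q \in Vdn n -> Indn n q <= #|Qd|.
Proof.
move=> Vq; rewrite Ind_card_below //; apply/subset_leq_card/subsetP => x.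
by move/below_Vd; apply: Vd_Qd.
Qed.

Lemma prec_Ind n u v : u \in Vdn n -> v \in Vdn n -> precn n u v -> Indn n u < Indn n v.
Proof.
move=> Vu Vv uv; rewrite !Ind_card_below //; apply/proper_card/properP; split.
  exact/below_sub/below_prec.
exists v; first exact: below_refl.
rewrite belowE Vv negb_or (negbTE (prec_asym Vu Vv uv)) andbT.
by case/andP: uv => ne_uv _; rewrite eq_sym.
Qed.

Lemma Ind_le_below n u v : u \in Vdn n -> v \in Vdn n -> Indn n u <= Indn n v ->
  u \in below n v.
Proof.
move=> Vu Vv le_uv; rewrite belowE Vu; have [//|ne_uv] := eqVneq u v.
have [//|vu] := orP (prec_total Vu Vv ne_uv).
by move: (prec_Ind Vv Vu vu); rewrite ltnNge le_uv.
Qed.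

Lemma Ind_inj n u v : u \in Vdn n -> v \in Vdn n -> Indn n u = Indn n v -> u = v.
Proof.
move=> Vu Vv eq_uv; apply/eqP; apply: contraT => ne_uv.
by have [/(prec_Ind Vu Vv)|/(prec_Ind Vv Vu)] := orP (prec_total Vu Vv ne_uv);
  rewrite eq_uv ltnn.
Qed.

(* Every vertex below [succ n v] is reached from a vertex below [v]: a minimal trace to
   it must pass through [Qd], where successors are unique. *)
Lemma below_succ_sub n v : v \in Vdn n -> below n.+1 (succ n v) \subset succ n @: below n v.
Proof.
move=> Vv; have vQd := Vd_Qd Vv; apply/subsetP => x'.
rewrite belowE => /andP[Vx' /orP[/eqP ->|/precP[ne_x' [s [tx' min_s]]]]].
  exact/imset_f/below_refl.
case/traceS: tx' => x [s0 [tx dx ->]] in min_s *.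
have [mv [tv min_mv]] := Vd_min_trace Vv; have [dv _] := succP n vQd.
have /min_s : trace n.+1 (succ n v) (rcons mv (Ord (succ n v))).
  by apply/traceS; exists v, mv.
rewrite lexle_rcons ?(trace_size tx) ?(trace_size tv) // => /andP[le_s0mv _].
have xQd : x \in Qd.
  apply: contraT => xNQd; have le_mvs0 : lexle mv s0.
    by rewrite (trace_notin_Qd tx xNQd) -(trace_size tv) lexle_nseq_None.
  have ne_vx : v != x by apply: contraNneq xNQd => <-.
  by move: (trace_neq tv tx vQd ne_vx); rewrite (lexle_anti le_s0mv le_mvs0) eqxx.
have Vx : x \in Vdn n by rewrite VdE (trace_V tx) xQd.
have [_ uniq_x] := succP n xQd; rewrite (uniq_x _ dx); apply: imset_f.
rewrite belowE Vx; have [//|ne_xv] := eqVneq x v.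
apply/precP; split=> //; exists s0; split=> // t tt.
exact: lexle_trans le_s0mv (min_mv _ tt).
Qed.

Lemma Ind_succ_le n v : v \in Vdn n -> Indn n.+1 (succ n v) <= Indn n v.
Proof.
move=> Vv; rewrite !Ind_card_below ?succ_Vd //.
exact: leq_trans (subset_leq_card (below_succ_sub Vv)) (leq_imset_card _ _).
Qed.

Section StableIndex.
Variables (n : nat) (v : Q).
Hypotheses (Vv : v \in Vdn n) (stable_v : Indn n.+1 (succ n v) = Indn n v).

Lemma succ_inj_below : {in below n v &, injective (succ n)}.
Proof.
apply/imset_injP; rewrite eqn_leq leq_imset_card -Ind_card_below // -stable_v.
by rewrite Ind_card_below ?succ_Vd //; apply: subset_leq_card (below_succ_sub Vv).
Qed.

(* Below a vertex whose index does not drop, successors preserve the order: two runs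
   that merged would identify two vertices below [v]. *)
Lemma prec_succ_below x u : x \in below n v -> u \in below n v ->
  precn n x u -> precn n.+1 (succ n x) (succ n u).
Proof.
move=> xv uv xu; have [Vx Vu] := (below_Vd xv, below_Vd uv).
have [xQd uQd] := (Vd_Qd Vx, Vd_Qd Vu).
have ne_succ : succ n x != succ n u.
  by apply: contraTneq xu => /(succ_inj_below xv uv) ->; rewrite precxx.
have [mx [tx min_mx]] := Vd_min_trace Vx; have [dx _] := succP n xQd.
apply/precP; split=> //; exists (rcons mx (Ord (succ n x))); split.
  by apply/traceS; exists x, mx.
move=> t /traceS[z [t0 [tz dz ->]]].
rewrite lexle_rcons ?(trace_size tz) ?(trace_size tx) //.
suff [le_mx ne_mx] : lexle mx t0 /\ mx != t0 by rewrite le_mx (negbTE ne_mx).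
have [zQd|zNQd] := boolP (z \in Qd); last first.
  split; first by rewrite (trace_notin_Qd tz zNQd) -(trace_size tx) lexle_nseq_None.
  by apply: (trace_neq tx tz xQd); apply: contraNneq zNQd => <-.
have Vz : z \in Vdn n by rewrite VdE (trace_V tz) zQd.
have succ_zu : succ n z = succ n u by have [_ uniq_z] := succP n zQd; rewrite -(uniq_z _ dz).
have xz : precn n x z.
  have [-> //|ne_zu] := eqVneq z u.
  have [zu|uz] := orP (prec_total Vz Vu ne_zu); last exact: prec_trans Vx Vu Vz xu uz.
  have zv : z \in below n v by apply: (subsetP (below_sub Vv uv)); apply: below_prec.
  by rewrite (succ_inj_below zv uv succ_zu) eqxx in ne_zu.
have [mz min_z] := Vd_min_trace Vz.
move: xz; rewrite (precE (conj tx min_mx) min_z) => /andP[ne_xz le_mxz].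
by split; [apply: lexle_trans le_mxz (min_z.2 _ tz) | apply: trace_neq tx tz xQd ne_xz].
Qed.

Lemma Ind_succ_ge_below u : u \in Vdn n -> Indn n u <= Indn n v ->
  Indn n u <= Indn n.+1 (succ n u).
Proof.
move=> Vu le_uv; have uv := Ind_le_below Vu Vv le_uv; have sub_uv := below_sub Vv uv.
have inj_u : {in below n u &, injective (succ n)}.
  by move=> a b au bu; apply: succ_inj_below; apply: (subsetP sub_uv).
rewrite Ind_card_below // Ind_card_below ?succ_Vd // -(card_in_imset inj_u).
apply/subset_leq_card/subsetP => _ /imsetP[x xu ->].
have [Vx xv] := (below_Vd xu, subsetP sub_uv x xu).
rewrite belowE succ_Vd //=; move: xu; rewrite belowE Vx => /orP[/eqP -> |xu].
  by rewrite eqxx.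
by rewrite prec_succ_below ?orbT.
Qed.

End StableIndex.

Lemma minInd_le i (A : {set Q}) q : q \in A -> minIndn i A <= Indn i q.
Proof. exact: big_minn_le. Qed.

Lemma minInd_attained i (A : {set Q}) : A \subset Vdn i -> A != set0 ->
  exists2 q, q \in A & minIndn i A = Indn i q.
Proof.
move=> sub_A /set0Pn[q qA]; apply: big_minn_attained qA _ => x xA.
by rewrite ltnS Ind_le_card_Qd // (subsetP sub_A).
Qed.

Lemma Acc_succ i q : q \in Accn i -> q \in Vdn i /\ alpha q (w i) (succ i q).
Proof.
rewrite inE => /andP[Vq /existsP[q' /and3P[_ dq' aq']]]; split=> //.
by have [_ /(_ _ dq') <-] := succP i (Vd_Qd Vq).
Qed.

Lemma Acc_intro i q q' : q \in Vdn i -> alpha q (w i) q' -> q \in Accn i.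
Proof.
move=> Vq aq'; rewrite inE Vq; apply/existsP; exists q'.
have dq' := alpha_delta aq'; have /andP[_ q'Qd] := alpha_in_Qd aq'.
by rewrite VdE (VS (Vd_V Vq) dq') q'Qd dq' aq'.
Qed.

Lemma Dec_succ i q : q \in Decn i -> q \in Vdn i /\ Indn i.+1 (succ i q) < Indn i q.
Proof.
rewrite inE => /andP[Vq /existsP[q' /and3P[_ dq' lt_q']]]; split=> //.
by have [_ /(_ _ dq') <-] := succP i (Vd_Qd Vq).
Qed.

Lemma Dec_intro i q : q \in Vdn i -> Indn i.+1 (succ i q) < Indn i q -> q \in Decn i.
Proof.
move=> Vq lt_q; rewrite inE Vq; apply/existsP; exists (succ i q).
by rewrite succ_Vd // lt_q (proj1 (succP i (Vd_Qd Vq))).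
Qed.

Lemma Acc_sub i : Accn i \subset Vdn i.
Proof. by apply/subsetP => q /Acc_succ[]. Qed.

Lemma Dec_sub i : Decn i \subset Vdn i.
Proof. by apply/subsetP => q /Dec_succ[]. Qed.

Lemma color_le_Acc i q : q \in Accn i -> colorn i <= 2 * Indn i q.
Proof.
move=> qA; have nA : (Accn i == set0) = false by apply/negbTE/set0Pn; exists q.
have le_q : 2 * minIndn i (Accn i) <= 2 * Indn i q by rewrite leq_mul2l minInd_le ?orbT.
by rewrite /color nA; case: ifP => _ //; rewrite geq_min le_q.
Qed.

Lemma color_le_Dec i q : q \in Decn i -> colorn i <= 2 * Indn i q - 1.
Proof.
move=> qD; have nD : (Decn i == set0) = false by apply/negbTE/set0Pn; exists q.
have le_q : 2 * minIndn i (Decn i) - 1 <= 2 * Indn i q - 1.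
  by apply: leq_sub2r; rewrite leq_mul2l minInd_le ?orbT.
by rewrite /color nD; case: ifP => _ //; rewrite geq_min le_q orbT.
Qed.

Lemma odd_color_Dec i : odd (colorn i) -> colorn i < 2 * #|Qd| + 1 ->
  exists2 q, q \in Decn i & colorn i = 2 * Indn i q - 1.
Proof.
rewrite /color; case: ifP => [_|/negbT nD].
  by case: ifP => _; [rewrite ltnn | rewrite mul2n odd_double].
have [q qD ->] := minInd_attained (Dec_sub i) nD.
move=> odd_c _; exists q => //; case: ifP odd_c => // _.
by case: leqP; rewrite ?mul2n ?odd_double.
Qed.

Lemma even_color_Acc i : ~~ odd (colorn i) ->
  exists2 q, q \in Accn i & colorn i = 2 * Indn i q.
Proof.
rewrite /color; case: ifP => [_|/negbT nD].
  case: ifP => [_|/negbT nA]; first by rewrite addn1 /= mul2n odd_double.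
  by have [q qA ->] := minInd_attained (Acc_sub i) nA; exists q.
have [qd _ ->] := minInd_attained (Dec_sub i) nD.
have odd_dec : odd (2 * Indn i qd - 1) by rewrite /Ind mulnS subn1 /= mul2n odd_double.
case: ifP => [_|/negbT nA]; first by rewrite odd_dec.
have [q qA ->] := minInd_attained (Acc_sub i) nA.
by case: leqP; rewrite ?odd_dec // => _ _; exists q.
Qed.

(* By [Ind_succ_ge_below], every decreasing vertex has a larger index than [v]. *)
Lemma stable_lt_odd_color i v : v \in Vdn i -> Indn i.+1 (succ i v) = Indn i v ->
  odd (colorn i) -> 2 * Indn i v < colorn i.
Proof.
move=> Vv stable_v odd_c; have le_v := Ind_le_card_Qd Vv.
have [le_max|lt_max] := leqP (2 * #|Qd| + 1) (colorn i); first by lia.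
have [q /Dec_succ[Vq lt_q] ->] := odd_color_Dec odd_c lt_max.
have lt_vq : Indn i v < Indn i q.
  rewrite ltnNge; apply: contraTN lt_q => le_qv.
  by rewrite -leqNgt (Ind_succ_ge_below Vv stable_v Vq le_qv).
by lia.
Qed.

Definition succ_run_from (rho : nat -> Q) M :=
  forall i, M <= i -> rho i \in Vdn i /\ rho i.+1 = succ i (rho i).

Lemma succ_run_Ind_nonincr rho M : succ_run_from rho M ->
  forall i, M <= i -> Indn i.+1 (rho i.+1) <= Indn i (rho i).
Proof. by move=> follows i le_Mi; have [Vi ->] := follows i le_Mi; apply: Ind_succ_le. Qed.

Lemma run_in_V (rho : nat -> Q) : rho 0 = q0 -> (forall i, delta (rho i) (w i) (rho i.+1)) ->
  forall i, rho i \in Vn i.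
Proof. by move=> rho0 run; elim=> [|i IH]; [rewrite /= inE rho0 | apply: VS IH (run i)]. Qed.

Lemma accepting_step_succ_run (rho : nat -> Q) M : rho 0 = q0 ->
  (forall i, delta (rho i) (w i) (rho i.+1)) -> alpha (rho M) (w M) (rho M.+1) ->
  succ_run_from rho M.
Proof.
move=> rho0 run aM i /subnKC <-; have /andP[MQd _] := alpha_in_Qd aM.
have QdM d : rho (M + d) \in Qd.
  by elim: d => [|d IH]; rewrite ?addn0 // addnS; apply: Qd_closed IH (run _).
have [_ uniq_succ] := succP (M + (i - M)) (QdM (i - M)).
by rewrite VdE run_in_V // QdM (uniq_succ _ (run _)).
Qed.

Lemma run_through n v : v \in Vdn n -> exists rho : nat -> Q,
  [/\ rho 0 = q0, forall i, delta (rho i) (w i) (rho i.+1), rho n = v & succ_run_from rho n].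
Proof.
move=> Vv; have [t [p [/and3P[p0 /forallP dp /eqP p_last] _]]] := V_trace (Vd_V Vv).
pose fix rho i := if i is j.+1 then (if j < n then nth q0 p j.+1 else succ j (rho j)) else q0.
have rho_prefix i : i <= n -> rho i = nth q0 p i.
  by case: i => [_|j le_jn] /=; [rewrite (eqP p0) | rewrite le_jn].
have follows : succ_run_from rho n.
  move=> i /subnKC <-; rewrite /= ltnNge leq_addr /=; split=> //.
  elim: (i - n) => [|d IH]; first by rewrite addn0 rho_prefix // p_last.
  by rewrite addnS /= ltnNge leq_addr /=; apply: succ_Vd.
exists rho; split=> //; last by rewrite rho_prefix.
move=> i; have [lt_in|le_ni] := ltnP i n.
  by rewrite rho_prefix ?(ltnW lt_in) //= lt_in; apply: dp (Ordinal lt_in).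
have [Vi ->] := follows i le_ni; exact: (succP i (Vd_Qd Vi)).1.
Qed.

(* An index drop at step [i] makes [rho i] decreasing, so [colorn i <= 2 * index - 1]. *)
Lemma succ_run_Ind_const rho M : succ_run_from rho M ->
  (forall i, M <= i -> 2 * Indn M (rho M) <= colorn i) ->
  forall i, M <= i -> Indn i (rho i) = Indn M (rho M).
Proof.
move=> follows colors_ge i /subnKC <-; elim: (i - M) => [|d IH]; first by rewrite addn0.
rewrite addnS; have [V_Md ->] := follows _ (leq_addr d M); apply/eqP.
rewrite eqn_leq -{1}IH Ind_succ_le //= leqNgt; apply/negP => lt_d.
have Dec_Md : rho (M + d) \in Decn (M + d) by apply: Dec_intro V_Md _; rewrite IH.
have := color_le_Dec Dec_Md.
by have := colors_ge _ (leq_addr d M); rewrite IH /Ind; lia.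
Qed.

Lemma accepting_run_even_summary : has_accepting_run q0 delta alpha w ->
  exists c, is_color_summary q0 delta alpha Qd Ord w c /\ ~~ odd c.
Proof.
case=> rho [rho0 run acc]; have [M [_ aM]] := acc 0.
have follows := accepting_step_succ_run rho0 run aM.
have [N [le_MN stable]] := eventually_constant (succ_run_Ind_nonincr follows).
set k := Indn N (rho N) in stable.
have often_le N' : exists i, N' <= i /\ colorn i <= 2 * k.
  have [i [le_i ai]] := acc (maxn N' N); rewrite geq_max in le_i.
  case/andP: le_i => le_N'i le_Ni; exists i; split=> //.
  have [Vi _] := follows i (leq_trans le_MN le_Ni).
  by rewrite -(stable _ le_Ni); apply: color_le_Acc; apply: Acc_intro Vi ai.
have [c0 le_c0 often_c0] := infinitely_often_le often_le.
have [c [often_c min_c]] := exists_min_infinitely_often often_c0.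
exists c; split=> //; apply/negP => odd_c.
have [i [le_Ni color_i]] := often_c N.
have [Vi succ_i] := follows i (leq_trans le_MN le_Ni).
have stable_i : Indn i.+1 (succ i (rho i)) = Indn i (rho i).
  by rewrite -succ_i stable ?(leqW le_Ni) // stable.
have := stable_lt_odd_color Vi stable_i; rewrite color_i stable //.
by have := min_c _ often_c0; lia.
Qed.

Lemma even_summary_accepting_run :
  (exists c, is_color_summary q0 delta alpha Qd Ord w c /\ ~~ odd c) ->
  has_accepting_run q0 delta alpha w.
Proof.
case=> c [[often_c min_c] even_c].
have [c' lt_c'c /min_c|N colors_ge] := eventually_ge (f := colorn) (c := c).
  by rewrite leqNgt lt_c'c.
have [i0 [le_Ni0 color_i0]] := often_c N.
have := even_color_Acc (i := i0); rewrite color_i0 => /(_ even_c)[q qA color_q].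
have [rho [rho0 run rho_q follows]] := run_through (subsetP (Acc_sub i0) q qA).
have stable : forall i, i0 <= i -> Indn i (rho i) = Indn i0 q.
  rewrite -rho_q; apply: succ_run_Ind_const follows _ => i le_i0i.
  by rewrite rho_q -color_q colors_ge // (leq_trans le_Ni0).
exists rho; split=> // N'.
have [i [le_i color_i]] := often_c (maxn N' i0); rewrite geq_max in le_i.
case/andP: le_i => le_N'i le_i0i; exists i; split=> //.
have := even_color_Acc (i := i); rewrite color_i => /(_ even_c)[q' /Acc_succ[Vq' aq'] color_q'].
have [Vi ->] := follows i le_i0i.
have <- // : q' = rho i by apply: Ind_inj Vq' Vi _; rewrite stable //; lia.
Qed.

End RunDag.

Theorem theorem1 (Q Sigma : finType) (q0 : Q) (delta alpha : Q -> Sigma -> Q -> bool)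
  (Qd : {set Q}) (Ord : Q -> option nat) (w : nat -> Sigma) :
  is_LDBA q0 delta alpha Qd ->
  is_ordering Qd Ord ->
  ((exists c, is_color_summary q0 delta alpha Qd Ord w c /\ ~~ odd c) <->
   has_accepting_run q0 delta alpha w).
Proof.
move=> ldba ordering.
by split; [apply: even_summary_accepting_run | apply: accepting_run_even_summary].
Qed.
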